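(* Let $M\in S_2^+$, let $e_1,\dots,e_n\in\mathbb Z^2$ with $n>2$, and let $\varepsilon\in\{-1,1\}$. Assume that for all $1\le i\le n$, with $e_{n+1}:=e_1$, $$\det(e_i,e_{i+1})=\varepsilon,\qquad \langle e_i,Me_{i+1}\rangle>-\tfrac12\min\{\|e_i\|_M^2,\|e_{i+1}\|_M^2\}.$$ Then every $M$-reduced basis $(e,f)$ of $\mathbb Z^2$ satisfies $\{e,f\}\subset\{e_1,\dots,e_n\}$.
   Context: $\|e\|_M:=\sqrt{\langle e,Me\rangle}$. A basis of $\mathbb Z^2$ is a pair in $\mathbb Z^2$ with determinant $\pm1$. An $M$-reduced basis is a basis $(e_1,e_2)$ with $\|e_1\|_M=\min\{\|e\|_M:e\in\mathbb Z^2\setminus\{0\}\}$ and $\|e_2\|_M=\min\{\|e\|_M:e\in\mathbb Z^2\setminus e_1\mathbb Z\}$. *)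

From Stdlib Require Import Reals ZArith.
Open Scope R_scope.

(* Real 2x2 matrices, stored as rows ((m11, m12), (m21, m22)). *)
Definition mat2 : Type := ((R * R) * (R * R))%type.

Definition m11 (M : mat2) : R := fst (fst M).
Definition m12 (M : mat2) : R := snd (fst M).
Definition m21 (M : mat2) : R := fst (snd M).
Definition m22 (M : mat2) : R := snd (snd M).

Definition innerR (u v : R * R) : R := fst u * fst v + snd u * snd v.
Definition mulmv (M : mat2) (v : R * R) : R * R :=
  (m11 M * fst v + m12 M * snd v, m21 M * fst v + m22 M * snd v).

Definition toR2 (e : Z * Z) : R * R := (IZR (fst e), IZR (snd e)).

Definition S2plus (M : mat2) : Prop :=
  m12 M = m21 M /\
  (forall v : R * R, v <> (0, 0) -> 0 < innerR v (mulmv M v)).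

Definition ipM (M : mat2) (e f : Z * Z) : R := innerR (toR2 e) (mulmv M (toR2 f)).

Definition normM (M : mat2) (e : Z * Z) : R := sqrt (ipM M e e).

Definition det2 (e f : Z * Z) : Z := (fst e * snd f - snd e * fst f)%Z.

Definition is_basis (e f : Z * Z) : Prop := det2 e f = 1%Z \/ det2 e f = (-1)%Z.

Definition in_line (e v : Z * Z) : Prop :=
  exists k : Z, v = (k * fst e, k * snd e)%Z.

Definition M_reduced (M : mat2) (e1 e2 : Z * Z) : Prop :=
  is_basis e1 e2 /\
  (e1 <> (0, 0)%Z /\ forall v : Z * Z, v <> (0, 0)%Z -> normM M e1 <= normM M v) /\
  (~ in_line e1 e2 /\ forall v : Z * Z, ~ in_line e1 v -> normM M e2 <= normM M v).

From Stdlib Require Import Reals ZArith Lra Lia Psatz Classical.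
Open Scope R_scope.

(* Let f be a vector of an M-reduced basis and let (u, w) range
   over the consecutive pairs (e_i, e_{i+1}), all of determinant eps.
   1. Winding: the cycle e_1, ..., e_n cannot lie strictly on one side of the
      line R f (going around it would make det(e_1, e_1) nonzero), hence f
      lies in a closed cone spanned by some consecutive pair (e_i, e_{i+1}).
   2. Since det(e_i, e_{i+1}) = eps = +-1, Cramer's rule writes
      f = a e_i + b e_{i+1} with integers a, b >= 0.
   3. If a, b >= 1, the "obtuse angle" condition on <e_i, M e_{i+1}> makes
      ||f||_M strictly longer than both e_i and e_{i+1}; this contradicts the
      minimality of f, since one of e_i, e_{i+1} is a competitor of f.
   4. Otherwise f is a positive multiple of e_i or e_{i+1}; as f belongs to a
      basis it is primitive, so f itself is e_i or e_{i+1}. *)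

Definition zcomb (a : Z) (u : Z * Z) (b : Z) (w : Z * Z) : Z * Z :=
  ((a * fst u + b * fst w)%Z, (a * snd u + b * snd w)%Z).

Definition primitive (f : Z * Z) : Prop :=
  forall (k : Z) (g : Z * Z), (1 <= k)%Z -> f = (k * fst g, k * snd g)%Z -> k = 1%Z.

Lemma det2_antisym (x y : Z * Z) : det2 x y = (- det2 y x)%Z.
Proof. destruct x, y; unfold det2; simpl; ring. Qed.

Lemma det2_pluecker (u w z f : Z * Z) :
  (det2 u w * det2 z f + det2 w z * det2 u f = det2 u z * det2 w f)%Z.
Proof. destruct u, w, z, f; unfold det2; simpl; ring. Qed.

Lemma det2_nonzero (u w : Z * Z) :
  det2 u w <> 0%Z -> u <> (0, 0)%Z /\ w <> (0, 0)%Z.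
Proof. intros Hd; split; intros ->; apply Hd; unfold det2; simpl; ring. Qed.

Lemma in_line_det2 (x u w : Z * Z) : in_line x u -> in_line x w -> det2 u w = 0%Z.
Proof. intros [k ->] [l ->]; unfold det2; simpl; ring. Qed.

Lemma cramer_unimodular (eps : Z) (u w f : Z * Z) :
  (eps * eps = 1)%Z -> det2 u w = eps ->
  f = zcomb (eps * det2 f w) u (eps * det2 u f) w.
Proof.
  intros Hsq Hd; destruct f as [x y], u as [u1 u2], w as [w1 w2].
  unfold zcomb, det2 in *; simpl in *.
  f_equal.
  - transitivity (x * (eps * eps))%Z; [rewrite Hsq; ring | subst eps; ring].
  - transitivity (y * (eps * eps))%Z; [rewrite Hsq; ring | subst eps; ring].
Qed.

Lemma basis_primitive (f g : Z * Z) : is_basis f g -> primitive f /\ primitive g.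
Proof.
  assert (Hunit : forall k x : Z, (1 <= k)%Z -> (k * x = 1 \/ k * x = -1)%Z -> k = 1%Z).
  { intros k x Hk [H | H]; destruct (Z.lt_trichotomy x 0) as [Hx | [-> | Hx]]; nia. }
  unfold is_basis, det2; intros Hb; split; intros k h Hk ->; simpl in Hb.
  - apply (Hunit k (fst h * snd g - snd h * fst g)%Z Hk).
    destruct Hb as [Hb | Hb]; rewrite <- Hb; [left | right]; ring.
  - apply (Hunit k (fst f * snd h - snd f * fst h)%Z Hk).
    destruct Hb as [Hb | Hb]; rewrite <- Hb; [left | right]; ring.
Qed.

Lemma primitive_multiple (f g : Z * Z) (k : Z) :
  primitive f -> (1 <= k)%Z -> f = (k * fst g, k * snd g)%Z -> f = g.
Proof.
  intros Hp Hk Hf; pose proof (Hp k g Hk Hf) as ->.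
  rewrite Hf, !Z.mul_1_l; destruct g; reflexivity.
Qed.

Section QuadraticForm.
Variable M : mat2.
Hypothesis HM : S2plus M.

Lemma ipM_zcomb (a b : Z) (u w : Z * Z) :
  ipM M (zcomb a u b w) (zcomb a u b w)
  = IZR a ^ 2 * ipM M u u + 2 * IZR a * IZR b * ipM M u w + IZR b ^ 2 * ipM M w w.
Proof.
  destruct HM as [Hsym _]; destruct u as [u1 u2], w as [w1 w2].
  destruct M as [[p q] [r s]].
  unfold ipM, zcomb, innerR, mulmv, toR2, m11, m12, m21, m22 in *; simpl in *.
  rewrite !plus_IZR, !mult_IZR; subst q; ring.
Qed.

Lemma ipM_nonneg (v : Z * Z) : 0 <= ipM M v v.
Proof.
  destruct HM as [_ Hpos]; destruct (classic (toR2 v = (0, 0))) as [H | H].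
  - unfold ipM; rewrite H; unfold innerR, mulmv; simpl; lra.
  - left; exact (Hpos _ H).
Qed.

Lemma normM_sq (v : Z * Z) : normM M v ^ 2 = ipM M v v.
Proof. apply pow2_sqrt, ipM_nonneg. Qed.

Lemma normM_le_ipM (u v : Z * Z) : normM M u <= normM M v -> ipM M u u <= ipM M v v.
Proof.
  intros Hle; rewrite <- !normM_sq; apply pow_incr; split; [apply sqrt_pos | exact Hle].
Qed.

End QuadraticForm.

Lemma comb_exceeds_larger (A B x y c : R) :
  1 <= A -> 1 <= B -> 0 <= x <= y -> c > - (1 / 2) * x ->
  A ^ 2 * x + 2 * A * B * c + B ^ 2 * y > y.
Proof.
  intros HA HB [Hx Hxy] Hc.
  assert (HAB0 : 0 < A * B) by nra.
  assert (Hcross : 2 * A * B * c > - (A * B * x)) by nra.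
  enough (x * (A ^ 2 - A * B) + (B ^ 2 - 1) * y >= 0) by nra.
  destruct (Rle_dec B A) as [HBA | HAB].
  - assert (0 <= x * (A * (A - B))) by (apply Rmult_le_pos; nra).
    assert (0 <= (B ^ 2 - 1) * y) by (apply Rmult_le_pos; nra).
    nra.
  - (* here x (A^2 - AB) >= y (A^2 - AB) and (A - B)^2 + AB >= 1 *)
    assert (0 <= (y - x) * (A * (B - A))) by (apply Rmult_le_pos; nra).
    assert (0 <= y * (A ^ 2 - A * B + B ^ 2 - 1)) by (apply Rmult_le_pos; nra).
    nra.
Qed.

Lemma comb_exceeds_both (A B x y c : R) :
  1 <= A -> 1 <= B -> 0 <= x -> 0 <= y -> c > - (1 / 2) * Rmin x y ->
  A ^ 2 * x + 2 * A * B * c + B ^ 2 * y > x /\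
  A ^ 2 * x + 2 * A * B * c + B ^ 2 * y > y.
Proof.
  intros HA HB Hx Hy Hc; destruct (Rle_dec x y) as [Hxy | Hxy].
  - rewrite Rmin_left in Hc by exact Hxy.
    pose proof (comb_exceeds_larger A B x y c HA HB (conj Hx Hxy) Hc); lra.
  - rewrite Rmin_right in Hc by lra.
    pose proof (comb_exceeds_larger B A y x c HB HA (conj Hy (Rlt_le _ _ (Rnot_le_lt _ _ Hxy))) Hc).
    lra.
Qed.

Lemma obtuse_comb_longer (M : mat2) (a b : Z) (u w : Z * Z) :
  S2plus M -> (1 <= a)%Z -> (1 <= b)%Z ->
  ipM M u w > - (1 / 2) * Rmin (normM M u ^ 2) (normM M w ^ 2) ->
  ipM M u u < ipM M (zcomb a u b w) (zcomb a u b w) /\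
  ipM M w w < ipM M (zcomb a u b w) (zcomb a u b w).
Proof.
  intros HM Ha Hb Hobt; rewrite !normM_sq in Hobt by exact HM.
  rewrite ipM_zcomb by exact HM.
  apply comb_exceeds_both; try apply ipM_nonneg; auto; apply IZR_le; exact Ha || exact Hb.
Qed.

Lemma cyclic_propagation (n : nat) (P : nat -> Prop) :
  (forall i, (i < n)%nat -> P i -> P ((i + 1) mod n)%nat) ->
  forall k, (k < n)%nat -> P k -> forall i, (i < n)%nat -> P i.
Proof.
  intros Hstep k Hk Pk.
  assert (Hreach : forall m, P ((k + m) mod n)%nat).
  { induction m as [| m IH].
    - rewrite Nat.add_0_r, Nat.mod_small by exact Hk; exact Pk.
    - replace (k + S m)%nat with (k + m + 1)%nat by lia.
      rewrite <- Nat.Div0.add_mod_idemp_l.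
      apply Hstep; [apply Nat.mod_upper_bound; lia | exact IH]. }
  intros i Hi; specialize (Hreach (n - k + i)%nat).
  replace (k + (n - k + i))%nat with (i + 1 * n)%nat in Hreach by lia.
  rewrite Nat.Div0.mod_add, Nat.mod_small in Hreach by exact Hi; exact Hreach.
Qed.

Lemma turn_transitive (s t : Z) (u w z f : Z * Z) :
  (s * det2 u w > 0)%Z -> (s * det2 w z > 0)%Z ->
  (t * det2 u f > 0)%Z -> (t * det2 w f > 0)%Z -> (t * det2 z f > 0)%Z ->
  (s * det2 u z > 0)%Z.
Proof.
  intros Huw Hwz Huf Hwf Hzf.
  assert (Hprod : ((s * det2 u z) * (t * det2 w f)
                   = (s * det2 u w) * (t * det2 z f) + (s * det2 w z) * (t * det2 u f))%Z).
  { transitivity (s * t * (det2 u z * det2 w f))%Z; [ring |].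
    rewrite <- det2_pluecker; ring. }
  nia.
Qed.

Section Winding.
Variables (n : nat) (e : nat -> Z * Z) (eps : Z).
Hypothesis Hn : (1 < n)%nat.
Hypothesis Heps : eps <> 0%Z.
Hypothesis Hdet : forall i, (i < n)%nat -> det2 (e i) (e ((i + 1) mod n)%nat) = eps.

Lemma turn_step (i : nat) : (S i < n)%nat -> (eps * det2 (e i) (e (S i)) > 0)%Z.
Proof.
  intros Hi; pose proof (Hdet i ltac:(lia)) as H.
  rewrite Nat.mod_small, Nat.add_1_r in H by lia; rewrite H; nia.
Qed.

Lemma no_halfplane (t : Z) (f : Z * Z) :
  ~ (forall i, (i < n)%nat -> (t * det2 (e i) f > 0)%Z).
Proof.
  intros Hside.
  assert (Hwind : forall k, (1 <= k < n)%nat -> (eps * det2 (e 0%nat) (e k) > 0)%Z).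
  { induction k as [| k IH]; intros Hk; [lia |].
    destruct (Nat.eq_dec k 0) as [-> | Hk0]; [apply turn_step; lia |].
    apply (turn_transitive eps t (e 0%nat) (e k) (e (S k)) f);
      [apply IH; lia | apply turn_step; lia | apply Hside; lia ..]. }
  assert (Hlast : (eps * det2 (e (n - 1)%nat) (e 0%nat) > 0)%Z).
  { pose proof (Hdet (n - 1) ltac:(lia)) as H.
    replace (n - 1 + 1)%nat with (1 * n)%nat in H by lia.
    rewrite Nat.Div0.mod_mul in H; rewrite H; nia. }
  pose proof (turn_transitive eps t (e 0%nat) (e (n - 1)%nat) (e 0%nat) f
                (Hwind (n - 1)%nat ltac:(lia)) Hlast
                (Hside 0%nat ltac:(lia)) (Hside (n - 1)%nat ltac:(lia))
                (Hside 0%nat ltac:(lia))) as Hself.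
  unfold det2 in Hself; nia.
Qed.

Lemma exists_cone (f : Z * Z) :
  exists i, (i < n)%nat /\ (eps * det2 (e i) f >= 0)%Z /\
            (eps * det2 f (e ((i + 1) mod n)%nat) >= 0)%Z.
Proof.
  apply NNPP; intros Hno.
  set (d := fun i => (eps * det2 (e i) f)%Z).
  assert (Hstep : forall i, (i < n)%nat -> (d i >= 0)%Z -> (d ((i + 1) mod n)%nat > 0)%Z).
  { intros i Hi Hdi; apply Z.lt_gt, Z.nle_gt; intros Hle; apply Hno; exists i.
    split; [exact Hi | split; [exact Hdi |]].
    unfold d in Hle; rewrite det2_antisym; nia. }
  destruct (classic (exists k, (k < n)%nat /\ (d k >= 0)%Z)) as [[k [Hk Hdk]] | Hneg].
  - apply (no_halfplane eps f).
    apply (cyclic_propagation n (fun i => d i > 0)%Z)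
      with (k := ((k + 1) mod n)%nat).
    + intros i Hi Hdi; apply Hstep; [exact Hi | lia].
    + apply Nat.mod_upper_bound; lia.
    + exact (Hstep k Hk Hdk).
  - apply (no_halfplane (- eps) f); intros i Hi.
    assert (d i < 0)%Z by (apply Z.nle_gt; intros Hge; apply Hneg; exists i; lia).
    unfold d in *; lia.
Qed.

End Winding.

Lemma reduced_vector_in_cycle (M : mat2) (n : nat) (e : nat -> Z * Z) (eps : Z) (f : Z * Z) :
  S2plus M -> (1 < n)%nat -> (eps = 1 \/ eps = -1)%Z ->
  (forall i, (i < n)%nat -> det2 (e i) (e ((i + 1) mod n)%nat) = eps) ->
  (forall i, (i < n)%nat ->
     ipM M (e i) (e ((i + 1) mod n)%nat) >
       - (1 / 2) * Rmin (normM M (e i) ^ 2) (normM M (e ((i + 1) mod n)%nat) ^ 2)) ->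
  f <> (0, 0)%Z -> primitive f ->
  (forall u w, det2 u w = eps -> ipM M f f <= ipM M u u \/ ipM M f f <= ipM M w w) ->
  exists i, (i < n)%nat /\ e i = f.
Proof.
  intros HM Hn Heps Hdet Hobt Hf0 Hprim Hshort.
  destruct (exists_cone n e eps Hn ltac:(lia) Hdet f) as [i [Hi [Hb Ha]]].
  set (j := ((i + 1) mod n)%nat) in *.
  assert (Hj : (j < n)%nat) by (apply Nat.mod_upper_bound; lia).
  set (a := (eps * det2 f (e j))%Z) in *; set (b := (eps * det2 (e i) f)%Z) in *.
  assert (Hf : f = zcomb a (e i) b (e j))
    by (apply cramer_unimodular; [lia | exact (Hdet i Hi)]).
  destruct (Z.eq_dec a 0) as [Ha0 | Ha0]; [| destruct (Z.eq_dec b 0) as [Hb0 | Hb0]].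
  -
    exists j; split; [exact Hj |]; symmetry.
    apply (primitive_multiple f (e j) b Hprim).
    + destruct (Z.eq_dec b 0) as [Hb0 | Hb0]; [| lia].
      exfalso; apply Hf0; rewrite Hf, Ha0, Hb0; reflexivity.
    + rewrite Hf at 1; rewrite Ha0; unfold zcomb; f_equal; ring.
  -
    exists i; split; [exact Hi |]; symmetry.
    apply (primitive_multiple f (e i) a Hprim); [lia |].
    rewrite Hf at 1; rewrite Hb0; unfold zcomb; f_equal; ring.
  -
    exfalso.
    destruct (obtuse_comb_longer M a b (e i) (e j) HM ltac:(lia) ltac:(lia) (Hobt i Hi))
      as [Hlong_i Hlong_j].
    rewrite <- Hf in Hlong_i, Hlong_j.
    destruct (Hshort (e i) (e j) (Hdet i Hi)); lra.
Qed.

Theorem mainTheorem11 (M : mat2) (n : nat) (e : nat -> Z * Z) (eps : Z) :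
  S2plus M ->
  (n > 2)%nat ->
  (eps = 1%Z \/ eps = (-1)%Z) ->
  (forall i : nat, (i < n)%nat ->
     det2 (e i) (e ((i + 1) mod n)%nat) = eps /\
     ipM M (e i) (e ((i + 1) mod n)%nat) >
       - (1 / 2) * Rmin (normM M (e i) ^ 2) (normM M (e ((i + 1) mod n)%nat) ^ 2)) ->
  forall f1 f2 : Z * Z, M_reduced M f1 f2 ->
    (exists i : nat, (i < n)%nat /\ e i = f1) /\
    (exists j : nat, (j < n)%nat /\ e j = f2).
Proof.
  intros HM Hn Heps Hcycle f1 f2 [Hbasis [[Hf1 Hmin1] [Hnl Hmin2]]].
  assert (Hn1 : (1 < n)%nat) by lia.
  pose proof (fun i Hi => proj1 (Hcycle i Hi)) as Hdet.
  pose proof (fun i Hi => proj2 (Hcycle i Hi)) as Hobt.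
  destruct (basis_primitive f1 f2 Hbasis) as [Hp1 Hp2].
  assert (Hnz : forall u w, det2 u w = eps -> u <> (0, 0)%Z /\ w <> (0, 0)%Z)
    by (intros u w Huw; apply det2_nonzero; lia).
  split; apply (reduced_vector_in_cycle M n e eps); auto.
  -
    intros u w Huw; left; apply normM_le_ipM, Hmin1, (Hnz u w Huw); exact HM.
  - intros ->; apply Hnl; exists 0%Z; reflexivity.
  - (* f2 is no longer than any vector off the line R f1, and a basis
       cannot lie on that line *)
    intros u w Huw.
    destruct (classic (in_line f1 u)) as [Hu | Hu]; [destruct (classic (in_line f1 w)) as [Hw | Hw] |].
    + exfalso; pose proof (in_line_det2 f1 u w Hu Hw); lia.
    + right; apply normM_le_ipM, Hmin2, Hw; exact HM.
    + left; apply normM_le_ipM, Hmin2, Hu; exact HM.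
Qed.
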